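(* Let $(X,d)$ be a metric space, $\mu$ a non-atomic Borel measure on $X$, $m$ a Borel measure on $X$ and $0<p<\infty$. If $\rho$ is a $p$-weak upper gradient of a function $f$ and $\varepsilon>0$, then there exists an upper gradient $\rho_\varepsilon$ of $f$ (with respect to $\Gamma^\mu$) such that $\rho_\varepsilon\ge\rho$ and $\|\rho-\rho_\varepsilon\|_{L^p(m)}<\varepsilon$.
   Context: A path is a continuous map $\gamma:[a,b]\to X$; a subpath is a restriction to a subinterval, trivial if that interval is a point; $\mathrm{Im}(\gamma)=\gamma([a,b])$. $\mu$ non-atomic: $\mu(\{x\})=0$ for all $x$. $\Gamma^\mu$ is the set of all non-trivial injective paths $\gamma$ with $0<\mu(\mathrm{Im}(\tilde\gamma))<\infty$ for every non-trivial subpath $\tilde\gamma$. For Borel $g\ge0$, $\int_\gamma g:=\int_{\mathrm{Im}(\gamma)}g\,d\mu$. For $\Gamma\subset\Gamma^\mu$, $\mathrm{Mod}_p(\Gamma)=\inf\int_Xg^p\,dm$ over Borel $g:X\to[0,\infty]$ with $\int_\gamma g\ge1$ for all $\gamma\in\Gamma$; a property holds for $p$-almost every path if the set of paths in $\Gamma^\mu$ where it fails has $p$-modulus zero. A Borel $\rho:X\to[0,\infty]$ is an upper gradient of $f:X\to[-\infty,\infty]$ with respect to $\Gamma^\mu$ if $|f(x)-f(y)|\le\int_\gamma\rho$ for every $\gamma\in\Gamma^\mu$ with endpoints $x,y$ such that $f(x),f(y)$ are finite; it is a $p$-weak upper gradient if $|f(x)-f(y)|\le\int_\gamma\rho$ for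 $p$-almost every $\gamma\in\Gamma^\mu$ with endpoints $x,y$. *)

From HB Require Import structures.
From mathcomp Require Import all_boot all_order all_algebra.
From mathcomp Require Import all_classical all_reals all_analysis.
From mathcomp Require Import measurable_realfun.
Set Implicit Arguments. Unset Strict Implicit. Unset Printing Implicit Defensive.
Import Order.TTheory GRing.Theory Num.Theory.
Import numFieldNormedType.Exports.
Local Open Scope classical_set_scope.
Local Open Scope ring_scope.

(* Metric spaces with a chosen point (needed because measurable types in
   MathComp-Analysis are pointed). *)
#[short(type="pmetricType")]
HB.structure Definition PointedMetric (K : numDomainType) :=
  { M of Pointed M & Metric K M }.

Definition borel_gen {R : realType} (X : pmetricType R) : set (set X) := @open X.
Arguments borel_gen {R} X.
Notation Borel X := (g_sigma_algebraType (borel_gen X)).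

Section paths.
Context {R : realType} {X : pmetricType R}.
Local Open Scope ereal_scope.

(* A path gamma : [a,b] -> X, represented by its endpoints a <= b and a map
   R -> X (only its values on [a,b] matter). *)
Record path := Path { pa : R; pb : R; pfun : R -> X }.

Definition is_path (g : path) : Prop :=
  (pa g <= pb g)%R /\ {within `[pa g, pb g], continuous (pfun g)}.

Definition img (g : path) (c d : R) : set X := pfun g @` `[c, d].
Definition Im (g : path) : set X := img g (pa g) (pb g).

Variable mu : {measure set (Borel X) -> \bar R}.

Definition nonatomic : Prop := forall x : Borel X, mu [set x] = 0.

Definition GammaMu : set path :=
  [set g | is_path g /\ (pa g < pb g)%R /\
           {in `[pa g, pb g] &, injective (pfun g)} /\
           (forall c d : R, (pa g <= c)%R -> (c < d)%R -> (d <= pb g)%R ->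
              0 < mu (img g c d) < +oo)].

Definition lineint (g : path) (rho : Borel X -> \bar R) : \bar R :=
  \int[mu]_(x in (Im g : set (Borel X))) rho x.

Definition Borel_nonneg (rho : Borel X -> \bar R) : Prop :=
  measurable_fun setT rho /\ forall x, 0 <= rho x.

Variable m : {measure set (Borel X) -> \bar R}.
Variable p : R.

Definition Modp (Gam : set path) : \bar R :=
  ereal_inf [set \int[m]_x (g x `^ p) | g in
    [set g : Borel X -> \bar R | Borel_nonneg g /\
       forall gam, Gam gam -> 1 <= lineint gam g]].

Definition pae (P : path -> Prop) : Prop :=
  Modp [set gam | GammaMu gam /\ ~ P gam] = 0.

Definition upper_gradient (f : X -> \bar R) (rho : Borel X -> \bar R) : Prop :=
  Borel_nonneg rho /\
  forall gam, GammaMu gam ->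
    f (pfun gam (pa gam)) \is a fin_num -> f (pfun gam (pb gam)) \is a fin_num ->
    `| f (pfun gam (pa gam)) - f (pfun gam (pb gam)) | <= lineint gam rho.

Definition weak_upper_gradient (f : X -> \bar R) (rho : Borel X -> \bar R) : Prop :=
  Borel_nonneg rho /\
  pae (fun gam => `| f (pfun gam (pa gam)) - f (pfun gam (pb gam)) | <= lineint gam rho).

End paths.

(* difference b - a of [0,oo]-valued quantities with a <= b, using the
   convention oo - oo = 0 *)
Definition ediff {R : realType} (b a : \bar R) : \bar R :=
  if a == +oo%E then 0%E else (b - a)%E.

From Pilot Require Import Defs.
From HB Require Import structures.
From mathcomp Require Import all_boot all_order all_algebra.
From mathcomp Require Import all_classical all_reals all_analysis.
From mathcomp Require Import measurable_realfun.
Import Order.TTheory GRing.Theory Num.Theory.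
Local Open Scope classical_set_scope.
Local Open Scope ring_scope.

(* The paths along which rho violates the upper-gradient inequality form a
   family Gamma of p-modulus zero.  Pick admissible densities g_n for Gamma with
   int g_n^p <= 2^-(n+1) (n+1)^-p (eps/2)^p and set
   h := (sum_n ((n+1) g_n)^p)^(1/p).  Then h >= (n+1) g_n for every n, so
   int_gamma h = oo on Gamma, while int h^p <= (eps/2)^p.  Hence rho + h is an
   upper gradient, and it exceeds rho by at most h. *)

Section ereal_facts.
Context {R : realType}.
Local Open Scope ereal_scope.

Lemma ge0_ler_poweR (r : R) (x y : \bar R) : (0 <= r)%R -> 0 <= x -> x <= y ->
  x `^ r <= y `^ r.
Proof.
move=> r0 x0 xy; apply: gt0_ler_poweR => //; rewrite in_itv/= ?leey ?andbT//.
exact: le_trans xy.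
Qed.

Lemma poweRK {r : R} {x : \bar R} : r != 0%R -> 0 <= x -> (x `^ r) `^ r^-1 = x.
Proof. by move=> r0 x0; rewrite -poweRrM mulfV// poweRe1. Qed.

Lemma poweRKV {r : R} {x : \bar R} : r != 0%R -> 0 <= x -> (x `^ r^-1) `^ r = x.
Proof. by move=> r0 x0; rewrite -poweRrM mulVf// poweRe1. Qed.

Lemma ge_natr_eqy (x : \bar R) : (forall n : nat, n%:R%:E <= x) -> x = +oo.
Proof.
case: x => [r| |] // xge; last by have := xge 0%N.
by have := xge (Num.truncn r).+1; rewrite lee_fin leNgt truncnS_gt.
Qed.

Lemma le_nneseries_poweR (p : R) (u : (\bar R)^nat) n : (0 < p)%R ->
  (forall k, 0 <= u k) -> u n <= (\sum_(0 <= k <oo) u k `^ p) `^ p^-1.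
Proof.
move=> p0 u0; rewrite -[leLHS](poweRK (lt0r_neq0 p0) (u0 n)).
apply: ge0_ler_poweR; [by rewrite invr_ge0 ltW | exact: poweR_ge0 |].
apply: le_trans (nneseries_lim_ge n.+1 _) => [|*]; last exact: poweR_ge0.
by rewrite big_nat_recr//= leeDr// sume_ge0// => *; exact: poweR_ge0.
Qed.

Lemma ediff_addr (a b : \bar R) : 0 <= a -> 0 <= b -> 0 <= ediff (a + b) a <= b.
Proof.
move=> a0 b0; rewrite /ediff; case: eqP => [_|a_ney]; first by rewrite lexx b0.
have a_fin : a \is a fin_num by rewrite ge0_fin_numE// ltey; apply/eqP.
by rewrite [a + b]addeC addeK// b0 lexx.
Qed.

End ereal_facts.

Section nonneg_integral.
Context {d} {T : measurableType d} {R : realType}.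
Variable mu : {measure set T -> \bar R}.
Local Open Scope ereal_scope.

(* Unlike [ge0_le_integral], no measurability is required: the integral of a
   nonnegative function is a supremum over the simple functions below it. *)
Lemma ge0_le_integral_nomeas (D : set T) (f g : T -> \bar R) :
  (forall x, 0 <= f x) -> (forall x, f x <= g x) ->
  \int[mu]_(x in D) f x <= \int[mu]_(x in D) g x.
Proof.
move=> f0 fg; have g0 x : 0 <= g x by exact: le_trans (f0 x) (fg x).
rewrite (ge0_integralE _ (fun x _ => f0 x)) (ge0_integralE _ (fun x _ => g0 x)).
apply: ereal_sup_le => _ [s /= sf <-]; exists s => //= x.
by apply: le_trans (sf x) _; rewrite /patch; case: ifP.
Qed.

Lemma le_Lnorm (p : R) (f g : T -> \bar R) : (0 < p)%R ->
  (forall x, `|f x| <= `|g x|) -> 'N[mu]_p%:E[f] <= 'N[mu]_p%:E[g].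
Proof.
move=> p0 fg; rewrite unlock; apply: ge0_ler_poweR.
- by rewrite invr_ge0 ltW.
- by apply: integral_ge0 => x _; exact: poweR_ge0.
apply: ge0_le_integral_nomeas => x; first exact: poweR_ge0.
exact: ge0_ler_poweR (ltW p0) (abse_ge0 _) (fg x).
Qed.

Lemma ge0_Lnorm_le {p B : R} {f : T -> \bar R} : (0 < p)%R -> (0 <= B)%R ->
  (forall x, 0 <= f x) -> \int[mu]_x (f x `^ p) <= B%:E ->
  'N[mu]_p%:E[f] <= (B `^ p^-1)%:E.
Proof.
move=> p0 B0 f0 f_int; rewrite unlock -poweR_EFin.
apply: ge0_ler_poweR; first by rewrite invr_ge0 ltW.
  by apply: integral_ge0 => x _; exact: poweR_ge0.
by under eq_integral do rewrite gee0_abs//.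
Qed.

End nonneg_integral.

Section line_integral.
Context {R : realType} {X : pmetricType R}.
Variable mu : {measure set (Borel X) -> \bar R}.
Local Open Scope ereal_scope.

Lemma measurable_Im (gam : Defs.path) : is_path gam ->
  measurable (Defs.Im gam : set (Borel X)).
Proof.
case=> _ cgam.
have cIm : compact (Defs.Im gam) :=
  continuous_compact cgam (@segment_compact _ _ _).
have clIm : closed (Defs.Im gam) := compact_closed (@metric_hausdorff _ X) cIm.
rewrite -[Defs.Im gam]setCK; apply: measurableC; apply: sub_sigma_algebra.
exact: closed_openC.
Qed.

Lemma le_lineint (gam : Defs.path) (g1 g2 : Borel X -> \bar R) :
  is_path gam -> Borel_nonneg g1 -> measurable_fun setT g2 ->
  (forall x, g1 x <= g2 x) -> lineint mu gam g1 <= lineint mu gam g2.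
Proof.
move=> /measurable_Im mIm [mg1 g10] mg2 g12.
by apply: ge0_le_integral => //;
  [exact: measurable_funS mg1 | exact: measurable_funS mg2].
Qed.

Lemma ge0_lineintZl (gam : Defs.path) (k : R) (g : Borel X -> \bar R) :
  is_path gam -> Borel_nonneg g -> (0 <= k)%R ->
  lineint mu gam (fun x => k%:E * g x) = k%:E * lineint mu gam g.
Proof.
move=> /measurable_Im mIm [mg g0] k0; apply: ge0_integralZl => //.
exact: measurable_funS mg.
Qed.

Lemma upper_gradientD (f : X -> \bar R) (rho h : Borel X -> \bar R) :
  Borel_nonneg rho -> Borel_nonneg h ->
  (forall gam, GammaMu mu gam ->
     ~ `| f (pfun gam (pa gam)) - f (pfun gam (pb gam)) | <= lineint mu gam rho ->
     lineint mu gam h = +oo) ->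
  upper_gradient mu f (fun x => rho x + h x).
Proof.
move=> rho_nonneg h_nonneg h_oo.
have [[mrho rho0] [mh h0]] := (rho_nonneg, h_nonneg).
have m_rhoh : measurable_fun setT (fun x => rho x + h x) :=
  emeasurable_funD mrho mh.
split=> [|gam Ggam _ _]; first by split=> // x; exact: adde_ge0.
have gam_path : is_path gam by case: Ggam.
have [rho_ok|rho_bad] := pselect (`| f (pfun gam (pa gam)) - f (pfun gam (pb gam)) |
                                   <= lineint mu gam rho).
  by apply: le_trans rho_ok _; apply: le_lineint => // x; exact: leeDl.
suff -> : lineint mu gam (fun x => rho x + h x) = +oo by exact: leey.
apply/eqP; rewrite eq_le leey/= -(h_oo _ Ggam rho_bad).
by apply: le_lineint => // x; exact: leeDr.
Qed.

End line_integral.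

Section null_modulus.
Context {R : realType} {X : pmetricType R}.
Variables (mu m : {measure set (Borel X) -> \bar R}) (p : R).
Hypothesis p_gt0 : (0 < p)%R.
Local Open Scope ereal_scope.

Lemma Modp0_admissible (Gam : set Defs.path) (t : R) :
  Modp mu m p Gam = 0 -> (0 < t)%R ->
  exists g : Borel X -> \bar R,
    [/\ Borel_nonneg g, forall gam, Gam gam -> 1 <= lineint mu gam g
      & \int[m]_x (g x `^ p) < t%:E].
Proof.
move=> Gam0 t0; have : Modp mu m p Gam < t%:E by rewrite Gam0 lte_fin.
by move=> /ereal_inf_lt[_ [g [g_nonneg g_adm] <-] g_int]; exists g.
Qed.

Definition pointwise_lpnorm (G : nat -> Borel X -> \bar R) (x : Borel X) :=
  (\sum_(0 <= n <oo) G n x `^ p) `^ p^-1.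

Section pointwise_lpnorm.
Variable G : nat -> Borel X -> \bar R.
Hypothesis G_nonneg : forall n, Borel_nonneg (G n).

Let mGp n : measurable_fun setT (fun x => G n x `^ p).
Proof. by apply: measurableT_comp (measurable_poweR _) _; case: (G_nonneg n). Qed.

Lemma pointwise_lpnorm_nonneg : Borel_nonneg (pointwise_lpnorm G).
Proof.
split=> [|x]; last exact: poweR_ge0.
apply: measurableT_comp (measurable_poweR _) _.
by apply: ge0_emeasurable_sum => [k x _ _|k _]; [exact: poweR_ge0|exact: mGp].
Qed.

Lemma le_pointwise_lpnorm n x : G n x <= pointwise_lpnorm G x.
Proof.
by apply: le_nneseries_poweR p_gt0 _ => k; case: (G_nonneg k).
Qed.

Lemma integral_pointwise_lpnorm_poweR :
  \int[m]_x (pointwise_lpnorm G x `^ p) = \sum_(0 <= n <oo) \int[m]_x (G n x `^ p).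
Proof.
have -> : (fun x => pointwise_lpnorm G x `^ p) =
           (fun x => \sum_(0 <= n <oo) G n x `^ p).
  apply/funext => x; rewrite poweRKV ?(lt0r_neq0 p_gt0)//.
  by apply: nneseries_ge0 => *; exact: poweR_ge0.
by apply: integral_nneseries => // n x _; exact: poweR_ge0.
Qed.

End pointwise_lpnorm.

Lemma Modp0_lineint_eqy (Gam : set Defs.path) (B : R) :
  Modp mu m p Gam = 0 -> (0 < B)%R -> (forall gam, Gam gam -> is_path gam) ->
  exists h : Borel X -> \bar R,
    [/\ Borel_nonneg h, forall gam, Gam gam -> lineint mu gam h = +oo
      & \int[m]_x (h x `^ p) <= B%:E].
Proof.
move=> Gam0 B0 Gam_path.
pose t n : R := (B / (2 ^ n.+1)%:R / n.+1%:R `^ p)%R.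
have t0 n : (0 < t n)%R by rewrite !divr_gt0 ?powR_gt0// ltr0n expn_gt0.
have [g gP] := choice (fun n => Modp0_admissible _ _ Gam0 (t0 n)).
have g_nonneg n : Borel_nonneg (g n) by case: (gP n).
pose G n x := n.+1%:R%:E * g n x.
have G_nonneg n : Borel_nonneg (G n).
  have [mg g0] := g_nonneg n.
  by split=> [|x]; [exact: measurable_funeM | rewrite mule_ge0].
exists (pointwise_lpnorm G); split.
- exact: pointwise_lpnorm_nonneg.
- move=> gam Ggam; have gam_path := Gam_path _ Ggam.
  apply: ge_natr_eqy => n; have [_ g_adm _] := gP n.
  have G_lineint : n.+1%:R%:E <= lineint mu gam (G n).
    rewrite ge0_lineintZl//.
    by rewrite -[X in X <= _]mule1 lee_pmul2l ?lte_fin ?ltr0n// g_adm.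
  apply: (@le_trans _ _ n.+1%:R%:E); first by rewrite lee_fin ler_nat.
  apply: le_trans G_lineint _; apply: le_lineint => //.
  - by case: (pointwise_lpnorm_nonneg _ G_nonneg).
  - exact: le_pointwise_lpnorm.
rewrite integral_pointwise_lpnorm_poweR//.
apply: le_trans (epsilon_trick0 xpredT (ltW B0)).
apply: lee_nneseries => [n _ _|n _].
  by apply: integral_ge0 => x _; exact: poweR_ge0.
have [[mg g0] _ g_int] := gP n.
rewrite /G; under eq_integral do rewrite poweRM ?lee_fin// poweR_EFin.
rewrite ge0_integralZl ?lee_fin ?powR_ge0//; last first.
  - by move=> x _; exact: poweR_ge0.
  - exact: measurableT_comp (measurable_poweR _) mg.
apply: (@le_trans _ _ ((n.+1%:R `^ p)%:E * (t n)%:E)).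
  by rewrite lee_pmul2l ?lte_fin ?powR_gt0 ?ltr0n// ltW.
by rewrite -EFinM /t mulrC divfK// gt_eqF// powR_gt0// ltr0n.
Qed.

End null_modulus.

Arguments Modp0_lineint_eqy {R X mu m p} p_gt0 {Gam B}.

Theorem proposition3p5 (R : realType) (X : pmetricType R)
    (mu m : {measure set (Borel X) -> \bar R}) (p : R)
    (f : X -> \bar R) (rho : Borel X -> \bar R) (eps : R) :
  nonatomic mu -> 0 < p ->
  weak_upper_gradient mu m p f rho -> 0 < eps ->
  exists rho_eps : Borel X -> \bar R,
    upper_gradient mu f rho_eps /\
    (forall x, rho x <= rho_eps x)%E /\
    ('N[m]_(p%:E)[(fun x => ediff (rho_eps x) (rho x))] < eps%:E)%E.
Proof.
move=> _ p0 [rho_nonneg Gam0] eps0.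
pose B := (eps / 2) `^ p.
have B0 : 0 < B by rewrite powR_gt0// divr_gt0.
have [h [h_nonneg h_oo h_int]] :=
  Modp0_lineint_eqy p0 Gam0 B0 (fun gam Ggam => Ggam.1.1).
have [[_ rho0] [_ h0]] := (rho_nonneg, h_nonneg).
exists (fun x => rho x + h x)%E; split; [|split].
- by apply: upper_gradientD => // gam Ggam rho_bad; exact: h_oo.
- by move=> x; rewrite leeDl.
apply: (@le_lt_trans _ _ 'N[m]_p%:E[h]%E).
  apply: le_Lnorm => // x.
  by have /andP[d0 dh] := ediff_addr _ _ (rho0 x) (h0 x); rewrite !gee0_abs.
apply: (@le_lt_trans _ _ (B `^ p^-1)%:E).
  exact: ge0_Lnorm_le _ p0 (ltW B0) h0 h_int.
rewrite /B -powRrM mulfV ?gt_eqF// powRr1 ?divr_ge0 ?ltW// lte_fin.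
by rewrite ltr_pdivrMr// ltr_pMr// ltr1n.
Qed.
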